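(* Every weakly mixing dynamical system $(X,T)$ is transitively sensitive.
   Context: A dynamical system $(X,T)$: $X$ is a compact metric space (metric $d$) with more than one point and without isolated points, $T:X\to X$ a continuous surjection. ''Opene'' means open and nonempty. $(X,T)$ is transitive if $N_T(U,V)=\{n\in\mathbb{Z}_+:U\cap T^{-n}V\neq\varnothing\}\neq\varnothing$ for all opene $U,V$; weakly mixing if $(X\times X,T\times T)$ is transitive. With $S_T(U,\delta)=\{n\in\mathbb{Z}_+:\exists x_1,x_2\in U,\ d(T^nx_1,T^nx_2)>\delta\}$, $(X,T)$ is transitively sensitive if there is $\delta>0$ with $S_T(W,\delta)\cap N_T(U,V)\neq\varnothing$ for all opene $U,V,W\subset X$. *)

From HB Require Import structures.
From mathcomp Require Import all_boot all_order all_algebra.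
From mathcomp Require Import all_classical all_reals all_analysis.
Set Implicit Arguments. Unset Strict Implicit. Unset Printing Implicit Defensive.
Import Order.TTheory GRing.Theory Num.Theory.
Local Open Scope classical_set_scope.
Local Open Scope ring_scope.

Definition opene {Y : topologicalType} (U : set Y) : Prop := open U /\ U !=set0.

Definition N_T {Y : topologicalType} (f : Y -> Y) (U V : set Y) : set nat :=
  [set n | U `&` (iter n f @^-1` V) !=set0].

Definition transitive {Y : topologicalType} (f : Y -> Y) : Prop :=
  forall U V : set Y, opene U -> opene V -> N_T f U V !=set0.

Definition prod_map {Y : Type} (f : Y -> Y) : Y * Y -> Y * Y :=
  fun p => (f p.1, f p.2).

Definition weakly_mixing {Y : topologicalType} (f : Y -> Y) : Prop :=
  transitive (prod_map f).

Definition S_T {R : realType} {X : metricType R} (f : X -> X) (U : set X)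
  (delta : R) : set nat :=
  [set n | exists x1 x2, U x1 /\ U x2 /\ delta < mdist (iter n f x1) (iter n f x2)].

Definition transitively_sensitive {R : realType} {X : metricType R}
  (f : X -> X) : Prop :=
  exists2 delta : R, 0 < delta &
    forall U V W : set X, opene U -> opene V -> opene W ->
      S_T f W delta `&` N_T f U V !=set0.

Definition dynamical_system {R : realType} {X : metricType R} (f : X -> X) : Prop :=
  [/\ compact [set: X],
      (exists x y : X, x <> y),
      (forall x : X, ~ open [set x]),
      continuous f &
      (forall y : X, exists x, f x = y)].

From HB Require Import structures.
From mathcomp Require Import all_boot all_order all_algebra.
From mathcomp Require Import all_classical all_reals all_analysis.
From mathcomp Require Import lra.
Set Implicit Arguments. Unset Strict Implicit. Unset Printing Implicit Defensive.
Import Order.TTheory GRing.Theory Num.Theory.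
Local Open Scope classical_set_scope.
Local Open Scope ring_scope.

(* Take two distinct points x, y, put delta := d(x, y) / 3 and let B1, B2 be
   the delta-balls around x and y.  Weak mixing applied to W × B1 and W × B2
   gives k such that W' := W ∩ T^-k W and B' := B1 ∩ T^-k B2 are nonempty
   open sets; applied to W' × U and B' × V it gives n in N(U, V) and w in W'
   with T^n w in B'.  Then w and T^k w both lie in W, while their n-th
   iterates lie in B1 and B2, hence are more than delta apart. *)

Lemma open_setX (Y Z : topologicalType) (A : set Y) (B : set Z) :
  open A -> open B -> open (A `*` B).
Proof.
move=> oA oB; rewrite openE => -[a b] [/= Aa Bb].
by exists (A, B) => //=; split; exact: open_nbhs_nbhs.
Qed.

Lemma opene_setX (Y Z : topologicalType) (A : set Y) (B : set Z) :
  opene A -> opene B -> opene (A `*` B).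
Proof.
move=> [oA [a Aa]] [oB [b Bb]]; split; first exact: open_setX.
by exists (a, b).
Qed.

Lemma opene_interior_ball (R : realType) (X : metricType R) (x : X) (r : R) :
  0 < r -> opene (ball x r)°.
Proof.
move=> r0; split; first exact: open_interior.
exists x; apply: nbhs_singleton; apply: nbhs_interior; exact: nbhsx_ballx.
Qed.

Lemma continuous_iter (Y : topologicalType) (f : Y -> Y) (n : nat) :
  continuous f -> continuous (iter n f).
Proof.
move=> cf; elim: n => [|n IH] x /=; first exact: cvg_id.
exact: continuous_comp (IH x) (cf _).
Qed.

Lemma iter_prod_map (Y : Type) (f : Y -> Y) (n : nat) (p : Y * Y) :
  iter n (prod_map f) p = (iter n f p.1, iter n f p.2).
Proof. by elim: n => [|n IH] /=; [case: p | rewrite IH]. Qed.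

Lemma N_T_prod_map (Y : topologicalType) (f : Y -> Y) (A B C D : set Y) :
  N_T (prod_map f) (A `*` B) (C `*` D) = N_T f A C `&` N_T f B D.
Proof.
apply/seteqP; split=> n /=.
- move=> [[a b] [[Aa Bb]]] /=; rewrite iter_prod_map => -[Ca Db].
  by split; [exists a | exists b].
- move=> [[a [Aa Ca]] [b [Bb Db]]]; exists (a, b).
  by rewrite /= iter_prod_map.
Qed.

Lemma weakly_mixing_N_TI (Y : topologicalType) (f : Y -> Y)
    (U1 V1 U2 V2 : set Y) :
  weakly_mixing f -> opene U1 -> opene V1 -> opene U2 -> opene V2 ->
  N_T f U1 V1 `&` N_T f U2 V2 !=set0.
Proof.
move=> wm oU1 oV1 oU2 oV2; rewrite -N_T_prod_map.
by apply: wm; exact: opene_setX.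
Qed.

Lemma opene_N_T (Y : topologicalType) (f : Y -> Y) (U V : set Y) (n : nat) :
  continuous f -> open U -> open V -> N_T f U V n ->
  opene (U `&` iter n f @^-1` V).
Proof.
move=> cf oU oV UVn; split=> //; apply: openI => //.
by move/continuous_iter/continuousP: cf; apply.
Qed.

Lemma weakly_mixing_N_T_spread (Y : topologicalType) (f : Y -> Y)
    (U V W B1 B2 : set Y) :
  continuous f -> weakly_mixing f ->
  opene U -> opene V -> opene W -> opene B1 -> opene B2 ->
  exists2 n, N_T f U V n &
    exists w w', [/\ W w, W w', B1 (iter n f w) & B2 (iter n f w')].
Proof.
move=> cf wm oU oV oW oB1 oB2.
have [k [WWk B12k]] := weakly_mixing_N_TI wm oW oW oB1 oB2.
have [n [WBn UVn]] := weakly_mixing_N_TI wm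
  (opene_N_T cf oW.1 oW.1 WWk) (opene_N_T cf oB1.1 oB2.1 B12k) oU oV.
exists n => //; move: WBn => [w [[Ww Wkw] [B1nw]]].
rewrite /= -iterD addnC iterD => B2nkw.
by exists w, (iter k f w).
Qed.

Lemma mdist_balls_gt (R : realType) (X : metricType R) (x y p q : X) (r : R) :
  ball x r p -> ball y r q -> mdist x y - 2 * r < mdist p q.
Proof.
rewrite !ballEmdist /= => xp yq.
have := metric_triangle x p y; have := metric_triangle p q y.
rewrite (metric_sym q y); lra.
Qed.

Theorem proposition4p5 (R : realType) (X : metricType R) (T : X -> X) :
  dynamical_system T -> weakly_mixing T -> transitively_sensitive T.
Proof.
move=> [_ [x [y /eqP xy]] _ cT _] wm.
have xy0 : 0 < mdist x y by rewrite mdist_gt0.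
have d0 : 0 < mdist x y / 3 by rewrite divr_gt0.
exists (mdist x y / 3) => // U V W oU oV oW.
have [n UVn [w [w' [Ww Ww' B1 B2]]]] := weakly_mixing_N_T_spread cT wm oU oV oW
  (opene_interior_ball x d0) (opene_interior_ball y d0).
exists n; split=> //; exists w, w'; do 2!split=> //.
have := mdist_balls_gt (interior_subset B1) (interior_subset B2); lra.
Qed.
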